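(* Let $\Pi$ be a tight $\mathrm{LP}^{\mathrm{MLN}}$ program such that $\mathrm{SM}'[\Pi]$ is not empty. Then $\Pi$ (under the $\mathrm{LP}^{\mathrm{MLN}}$ semantics) and its completion $\mathit{Comp}(\Pi)$ (under the MLN semantics) have the same probability distribution over all interpretations, i.e. $P_\Pi(I)=P_{\mathit{Comp}(\Pi)}(I)$ for every interpretation $I$.
   Context: Signature $\sigma$ with no function constants of positive arity; interpretations are sets of ground atoms. A formula is negative if every occurrence of every atom is in the scope of negation. A rule has the form $A\leftarrow B\wedge N$ ($A$ a possibly empty disjunction of atoms $A_1\vee\dots\vee A_k$, $B$ a conjunction of atoms, $N$ a negative formula; $B\wedge N$ is its body), identified with $B\wedge N\rightarrow A$. For a ground program $\Pi$, the reduct $\Pi^I$ consists of $A\leftarrow B$ for rules $A\leftarrow B\wedge N$ with $I\models N$; $I$ is a stable model of $\Pi$ if it is a minimal model of $\Pi^I$. An $\mathrm{LP}^{\mathrm{MLN}}$ program $\Pi$ is a finite set of weighted rules $w:R$ ($w$ real, soft, or the symbol $\alpha$, hard), identified with its ground instance. $\overline{\Pi}$ drops weights; $\Pi_I=\{w:R\in\Pi\mid I\models R\}$; $\Pi^{\rm hard},\Pi^{\rm soft}$ are its hard and soft rules. $\mathrm{SM}[\Pi]=\{I\mid I$ stable model of $\overline{\Pi_I}\}$; $W_\Pi(I)=\exp(\sum_{w:R\in\Pi_I}w)$ if $I\in\mathrm{SM}[\Pi]$, else $0$; $P_\Pi(I)=\lim_{\alpha\to\infty}W_\Pi(I)/\sum_{J\in\mathrm{SM}[\Pi]}W_\Pi(J)$.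 $\mathrm{SM}'[\Pi]$ is the set of $I$ that are stable models of $\overline{\Pi_I}$ and satisfy $\overline{\Pi^{\rm hard}}$. $\Pi$ is tight if the positive dependency graph of $\overline{\Pi}$ (vertices: ground atoms; an edge from each atom in $A$ to each atom in $B$ for every rule $A\leftarrow B\wedge N$) is acyclic. An MLN is a finite set of weighted formulas $w:F$ ($w$ real or $\alpha$); $W_{\mathbb{L}}(I)=\exp(\sum w)$ over the formulas of $\mathbb{L}$ satisfied by $I$, and $P_{\mathbb{L}}(I)=\lim_{\alpha\to\infty}W_{\mathbb{L}}(I)/\sum_J W_{\mathbb{L}}(J)$ over all interpretations $J$. $\mathit{Comp}(\Pi)$ is the MLN consisting of all $w:R$ in $\Pi$ (with $R$ read as the formula $B\wedge N\rightarrow A$) together with, for each ground atom $A$, the hard formula $\alpha:\ A\rightarrow\bigvee (\mathit{Body}\wedge\bigwedge_{A'\in\{A_1,\dots,A_k\}\setminus\{A\}}\neg A')$, the disjunction ranging over all rules $w: A_1\vee\dots\vee A_k\leftarrow\mathit{Body}$ in $\Pi$ with $A\in\{A_1,\dots,A_k\}$. *)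

From HB Require Import structures.
From mathcomp Require Import all_boot all_order all_algebra.
From mathcomp Require Import all_classical all_reals.
From mathcomp Require Import topology normedtype sequences.
From mathcomp.analysis Require Import exp.
Set Implicit Arguments. Unset Strict Implicit. Unset Printing Implicit Defensive.
Import Order.TTheory GRing.Theory Num.Theory.
Import numFieldNormedType.Exports.
Local Open Scope ring_scope.

Section LPMLN.
Variable A : finType.

Inductive form :=
| FAtom of A | FTop | FBot | FNeg of form
| FAnd of form & form | FOr of form & form | FImp of form & form.

Fixpoint sat (I : {set A}) (f : form) : bool :=
  match f with
  | FAtom a => a \in I
  | FTop => true | FBot => false
  | FNeg g => ~~ sat I g
  | FAnd g h => sat I g && sat I h
  | FOr g h => sat I g || sat I h
  | FImp g h => sat I g ==> sat I h
  end.

Fixpoint negative (f : form) : bool :=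
  match f with
  | FAtom _ => false
  | FTop | FBot | FNeg _ => true
  | FAnd g h | FOr g h | FImp g h => negative g && negative h
  end.

Definition bigand (s : seq form) : form := foldr FAnd FTop s.
Definition bigor (s : seq form) : form := foldr FOr FBot s.

(* ground rule  A_1 v ... v A_k <- B /\ N  *)
Record rule := Rule { head : seq A; pbody : seq A; nbody : form }.

Definition body_form (r : rule) : form :=
  FAnd (bigand (map FAtom (pbody r))) (nbody r).
Definition rule_form (r : rule) : form :=
  FImp (body_form r) (bigor (map FAtom (head r))).
Definition sat_rule (I : {set A}) (r : rule) : bool := sat I (rule_form r).

(* positive (reduct) rules: head <- positive body *)
Definition prule := (seq A * seq A)%type.
Definition sat_prule (I : {set A}) (r : prule) : bool :=
  all (fun b => b \in I) r.2 ==> has (fun a => a \in I) r.1.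
Definition reduct (P : seq rule) (I : {set A}) : seq prule :=
  [seq (head r, pbody r) | r <- P & sat I (nbody r)].
Definition model_pos (P : seq prule) (J : {set A}) : bool := all (sat_prule J) P.
Definition stable (P : seq rule) (I : {set A}) : Prop :=
  model_pos (reduct P I) I /\
  forall J : {set A}, J \proper I -> ~~ model_pos (reduct P I) J.

Variable R : realType.

Inductive weight := Soft of R | Hard.
Definition wval (alpha : R) (w : weight) : R :=
  match w with Soft x => x | Hard => alpha end.
Definition is_hard (w : weight) : bool := if w is Hard then true else false.

Definition program := seq (weight * rule).
Definition unweight (P : program) : seq rule := map snd P.
Definition prog_sat (P : program) (I : {set A}) : program :=
  [seq wr <- P | sat_rule I wr.2].

Definition SM (P : program) (I : {set A}) : Prop := stable (unweight (prog_sat P I)) I.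
Definition SM' (P : program) (I : {set A}) : Prop :=
  SM P I /\ all (fun wr => sat_rule I wr.2) [seq wr <- P | is_hard wr.1].

Definition W_lp (alpha : R) (P : program) (I : {set A}) : R :=
  if `[< SM P I >] then expR (\sum_(wr <- prog_sat P I) wval alpha wr.1) else 0.
Definition Z_lp (alpha : R) (P : program) : R := \sum_(J : {set A}) W_lp alpha P J.
(* P_Pi(I) is the limit of this quantity as alpha -> +oo *)
Definition Pr_lp_alpha (P : program) (I : {set A}) (alpha : R) : R :=
  W_lp alpha P I / Z_lp alpha P.

Definition dep_edge (P : program) : rel A :=
  fun a b => has (fun wr => (a \in head wr.2) && (b \in pbody wr.2)) P.
Definition tight (P : program) : Prop :=
  forall a b, dep_edge P a b -> ~~ connect (dep_edge P) b a.

Definition mln := seq (weight * form).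
Definition W_mln (alpha : R) (L : mln) (I : {set A}) : R :=
  expR (\sum_(wf <- L | sat I wf.2) wval alpha wf.1).
Definition Z_mln (alpha : R) (L : mln) : R := \sum_(J : {set A}) W_mln alpha L J.
Definition Pr_mln_alpha (L : mln) (I : {set A}) (alpha : R) : R :=
  W_mln alpha L I / Z_mln alpha L.

Definition comp_atom (P : program) (a : A) : weight * form :=
  (Hard, FImp (FAtom a)
     (bigor [seq FAnd (body_form wr.2)
                 (bigand [seq FNeg (FAtom a') | a' <- head wr.2 & a' != a])
            | wr <- P & a \in head wr.2])).
Definition Comp (P : program) : mln :=
  [seq (wr.1, rule_form wr.2) | wr <- P] ++ [seq comp_atom P a | a <- enum A].

End LPMLN.

From Pilot Require Import Defs.
From HB Require Import structures.
From mathcomp Require Import all_boot all_order all_algebra.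
From mathcomp Require Import all_classical all_reals.
From mathcomp Require Import topology normedtype sequences.
From mathcomp.analysis Require Import exp.
From mathcomp Require Import ring zify.
Import Order.TTheory GRing.Theory Num.Theory.
Import numFieldNormedType.Exports.
Local Open Scope classical_set_scope.
Local Open Scope ring_scope.

Set Implicit Arguments.
Unset Strict Implicit.
Unset Printing Implicit Defensive.

(* Fages' theorem: for a tight program, the stable models of [Pi] are exactly
   the interpretations satisfying the completion formulas, since minimality can
   be checked along the positive dependency relation, which tightness makes well
   founded.  Both unnormalised weights have the form [c(I) exp(alpha k(I))],
   where [k(I)] counts the satisfied hard rules (for [Comp(Pi)] also the
   satisfied completion formulas).  As [alpha -> +oo] the normalised weights
   converge to [c] restricted to the interpretations of maximal [k] and
   renormalised.  An element of [SM'[Pi]] attains the maximum in both cases, and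
   by Fages' theorem the two sets of maximisers and the values of [c] on them
   coincide. *)

HB.instance Definition _ (A : finType) := gen_eqMixin (rule A).
HB.instance Definition _ (R : realType) := gen_eqMixin (weight R).

Lemma acyclic_sink (T : finType) (e : rel T) (D : {set T}) (x : T) :
  (forall a b, e a b -> ~~ connect e b a) -> x \in D ->
  exists2 a, a \in D & forall b, e a b -> b \notin D.
Proof.
move=> acyclic_e xD.
pose reach a := finset (connect e a).
case: (arg_minnP (fun a => #|reach a|) xD) => a aD a_min.
exists a => // b eab; apply/negP => bD.
have := a_min b bD; rewrite leqNgt => /negP; apply.
apply/proper_card/properP; split.
  by apply/fintype.subsetP => y; rewrite !inE; apply: connect_trans (connect1 eab).
by exists a; rewrite !inE ?connect0 //; exact: acyclic_e.
Qed.

Lemma has_filter_predI (T : Type) (p q : pred T) (s : seq T) :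
  has p [seq x <- s | q x] = has (predI p q) s.
Proof. by rewrite !has_count count_filter. Qed.

Section Satisfaction.
Variable A : finType.
Implicit Types (I J : {set A}) (r : rule A).

Lemma sat_bigand I s : sat I (bigand s) = all (sat I) s.
Proof. by elim: s => //= f s ->. Qed.

Lemma sat_bigor I s : sat I (bigor s) = has (sat I) s.
Proof. by elim: s => //= f s ->. Qed.

Lemma sat_body_form I r :
  sat I (body_form r) = all (fun b => b \in I) (pbody r) && sat I (nbody r).
Proof. by rewrite /= sat_bigand all_map. Qed.

Lemma sat_ruleE I r :
  sat_rule I r = sat I (nbody r) ==> sat_prule I (Defs.head r, pbody r).
Proof.
rewrite /sat_rule /sat_prule /= sat_bigand sat_bigor all_map has_map /=.
by case: (all _ _); case: (sat I _).
Qed.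

Lemma model_pos_reduct (P : seq (rule A)) I J :
  model_pos (reduct P I) J =
  all (fun r => sat I (nbody r) ==> sat_prule J (Defs.head r, pbody r)) P.
Proof. by rewrite /model_pos /reduct all_map all_filter. Qed.

End Satisfaction.

Section Completion.
Variables (R : realType) (A : finType) (P : program A R).
Implicit Types (I J : {set A}) (a : A).

Definition supports I a (r : rule A) : bool :=
  [&& a \in Defs.head r, sat I (body_form r) &
      all (fun a' => (a' != a) ==> (a' \notin I)) (Defs.head r)].

Lemma sat_comp_atom I a :
  sat I (comp_atom P a).2 = (a \in I) ==> has (fun wr => supports I a wr.2) P.
Proof.
rewrite /= sat_bigor has_map has_filter_predI; congr (_ ==> _).
apply: eq_has => wr /=.
by rewrite /supports /= !sat_bigand !all_map all_filter [LHS]andbC.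
Qed.

Lemma model_pos_reduct_prog_sat I J :
  model_pos (reduct (unweight (prog_sat P I)) I) J =
  all (fun wr => sat_rule I wr.2 ==> sat I (nbody wr.2) ==>
                 sat_prule J (Defs.head wr.2, pbody wr.2)) P.
Proof. by rewrite model_pos_reduct all_map all_filter. Qed.

Lemma SM_sat_comp_atom I a : SM P I -> sat I (comp_atom P a).2.
Proof.
move=> [_ I_min]; rewrite sat_comp_atom; apply/implyP => aI.
(* If no rule supports [a], then [I :\ a] is still a model of the reduct. *)
apply: contraT => unsupported; have := I_min _ (properD1 aI).
rewrite model_pos_reduct_prog_sat => /allPn[wr wrP] /=.
rewrite /sat_prule /= !negb_imply => /and4P[Ir Nr B_Ia no_head].
have B_I : all (fun b => b \in I) (pbody wr.2).
  by apply: sub_all B_Ia => b /setD1P[_].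
have /hasP[x xh xI] : has (fun x => x \in I) (Defs.head wr.2).
  by move: Ir; rewrite sat_ruleE Nr /sat_prule /= B_I.
case/negP: unsupported; apply/hasP; exists wr => //; apply/and3P; split.
- apply: contraR no_head => aNh; apply/hasP; exists x => //.
  by rewrite !inE xI andbT; apply: contraNneq aNh => <-.
- by rewrite sat_body_form B_I.
- apply/allP => y yh; apply/implyP => ya; apply: contra no_head => yI.
  by apply/hasP; exists y; rewrite // !inE ya.
Qed.

Lemma sat_comp_atom_SM I :
  tight P -> (forall a, sat I (comp_atom P a).2) -> SM P I.
Proof.
move=> tightP comp_I; split.
  rewrite model_pos_reduct_prog_sat; apply/allP => wr _.
  by rewrite sat_ruleE; apply/implyP.
move=> J /properP[JI [x xI xJ]]; apply/negP.
rewrite model_pos_reduct_prog_sat => /allP J_model.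
(* An [a] in [I :\: J] with no dependency edge into [I :\: J] has a supporting
   rule whose positive body holds in [J]; but no head atom of it can be in [J]. *)
have xD : x \in I :\: J by rewrite inE xJ xI.
have [a /setDP[aI aJ] a_sink] := acyclic_sink tightP xD.
move: (comp_I a); rewrite sat_comp_atom aI implyTb => /hasP[wr wrP /and3P[ah]].
rewrite sat_body_form => /andP[B_I Nr] others.
have Ir : sat_rule I wr.2.
  by rewrite sat_ruleE Nr /sat_prule B_I /=; apply/hasP; exists a.
have := J_model wr wrP; rewrite Ir Nr /sat_prule /=.
have -> : all (fun b => b \in J) (pbody wr.2).
  apply/allP => b bB; apply: contraT => bJ.
  have eab : dep_edge P a b by apply/hasP; exists wr; rewrite ?ah ?bB.
  by have := a_sink b eab; rewrite inE bJ (allP B_I b bB).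
move=> /hasP[y yh yJ]; have ya : y != a by apply: contraNneq aJ => <-.
by move: (implyP (allP others y yh) ya); rewrite (fintype.subsetP JI y yJ).
Qed.

Lemma SM_iff_sat_comp I :
  tight P -> SM P I <-> forall a, sat I (comp_atom P a).2.
Proof.
move=> tightP; split=> [SM_I a | comp_I].
  exact: SM_sat_comp_atom.
exact: sat_comp_atom_SM.
Qed.

End Completion.

Lemma eqn_add_le (m1 m2 n1 n2 : nat) : (m1 <= n1)%N -> (m2 <= n2)%N ->
  (m1 + m2 == n1 + n2) = (m1 == n1) && (m2 == n2).
Proof.
by move=> le1 le2; apply/eqP/andP => [E | [/eqP-> /eqP->]] //; split; apply/eqP; lia.
Qed.

Lemma cvg_exprn (K : numFieldType) (T : Type) (F : set_system T) {FF : Filter F}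
    (f : T -> K) (l : K) n :
  f x @[x --> F] --> l -> f x ^+ n @[x --> F] --> l ^+ n.
Proof.
move=> fl; elim: n => [|n IH].
  by under eq_cvg do rewrite expr0; rewrite expr0; apply: cvg_cst.
by under eq_cvg do rewrite exprS; rewrite exprS; apply: cvgM.
Qed.

Section Limits.
Variable R : realType.

Lemma cvg_expR_gap (k K : nat) : (k <= K)%N ->
  expR (a * k%:R) / expR (a * K%:R) @[a --> +oo] --> ((k == K)%:R : R).
Proof.
move=> kK; have gapE a : expR (a * k%:R) / expR (a * K%:R) = expR (- a) ^+ (K - k).
  by rewrite -expRM_natl -expRN -expRD natrB //; congr expR; ring.
under eq_cvg do rewrite gapE.
have -> : (k == K) = (K - k == 0)%N by rewrite subn_eq0 eqn_leq kK.
by rewrite -expr0n; apply: cvg_exprn; apply: cvgr_expR.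
Qed.

Lemma cvg_expR_ratio (T : finType) (c : T -> R) (k : T -> nat) (K : nat) (J0 I : T) :
  (forall J, 0 <= c J) -> (forall J, (k J <= K)%N) -> k J0 = K -> 0 < c J0 ->
  c I * expR (a * (k I)%:R) / \sum_J c J * expR (a * (k J)%:R) @[a --> +oo]
    --> c I * (k I == K)%:R / \sum_J c J * (k J == K)%:R.
Proof.
move=> c_ge0 k_le kJ0 cJ0.
pose gap J (a : R) := expR (a * (k J)%:R) / expR (a * K%:R).
have ratioE a : c I * expR (a * (k I)%:R) / \sum_J c J * expR (a * (k J)%:R) =
                c I * gap I a / \sum_J c J * gap J a.
  have -> : \sum_J c J * gap J a = (\sum_J c J * expR (a * (k J)%:R)) / expR (a * K%:R).
    by rewrite mulr_suml; apply: eq_bigr => J _; rewrite mulrA.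
  rewrite /gap mulrA invfM invrK mulrACA mulVf ?mulr1 //.
  by rewrite gt_eqF ?expR_gt0.
under eq_cvg do rewrite ratioE.
apply: cvgM; first by apply: cvgM; [exact: cvg_cst | exact: cvg_expR_gap].
apply: cvgV.
  rewrite psumr_neq0 => [|J _]; last by rewrite mulr_ge0.
  by apply/hasP; exists J0; rewrite ?mem_index_enum // kJ0 eqxx mulr1.
apply: cvg_big => [|J _]; first exact: add_continuous.
by apply: cvgM; [exact: cvg_cst | exact: cvg_expR_gap].
Qed.

End Limits.

Section Weights.
Variables (R : realType) (A : finType).
Implicit Types (P s : program A R) (I J : {set A}).

Definition soft_sum s : R := \sum_(wr <- s) (if wr.1 is Soft x then x else 0).
Definition hard_count s : nat := count (fun wr => is_hard wr.1) s.
Definition comp_count P I : nat := count (fun a => sat I (comp_atom P a).2) (enum A).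

Lemma sum_wval alpha s :
  \sum_(wr <- s) wval alpha wr.1 = soft_sum s + alpha * (hard_count s)%:R.
Proof.
rewrite /soft_sum /hard_count; elim: s => [|[[x|] r] s IH].
- by rewrite !big_nil mulr0 addr0.
- by rewrite !big_cons IH /= add0n addrA.
- by rewrite !big_cons IH /= add1n -addn1 natrD; ring.
Qed.

Lemma Pr_lp_alphaE P I alpha :
  Pr_lp_alpha P I alpha =
  (if `[< SM P I >] then expR (soft_sum (prog_sat P I)) else 0) *
    expR (alpha * (hard_count (prog_sat P I))%:R) /
  \sum_J (if `[< SM P J >] then expR (soft_sum (prog_sat P J)) else 0) *
    expR (alpha * (hard_count (prog_sat P J))%:R).
Proof.
have W_lpE J :
    W_lp alpha P J = (if `[< SM P J >] then expR (soft_sum (prog_sat P J)) else 0) *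
                     expR (alpha * (hard_count (prog_sat P J))%:R).
  by rewrite /W_lp sum_wval expRD; case: ifP; rewrite ?mul0r.
by rewrite /Pr_lp_alpha /Z_lp W_lpE; under eq_bigr do rewrite W_lpE.
Qed.

Lemma Pr_mln_CompE P I alpha :
  Pr_mln_alpha (Comp P) I alpha =
  expR (soft_sum (prog_sat P I)) *
    expR (alpha * (hard_count (prog_sat P I) + comp_count P I)%:R) /
  \sum_J expR (soft_sum (prog_sat P J)) *
    expR (alpha * (hard_count (prog_sat P J) + comp_count P J)%:R).
Proof.
have W_mlnE J :
    W_mln alpha (Comp P) J = expR (soft_sum (prog_sat P J)) *
                             expR (alpha * (hard_count (prog_sat P J) + comp_count P J)%:R).
  rewrite /W_mln /Comp big_cat /=.
  have -> : \sum_(wf <- [seq (wr.1, rule_form wr.2) | wr <- P] | sat J wf.2) wval alpha wf.1 =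
            \sum_(wr <- prog_sat P J) wval alpha wr.1 by rewrite big_map big_filter.
  have -> : \sum_(wf <- [seq comp_atom P a | a <- enum A] | sat J wf.2) wval alpha wf.1 =
            alpha * (comp_count P J)%:R.
    by rewrite big_map big_const_seq iter_addr_0 mulr_natr.
  by rewrite sum_wval -expRD natrD mulrDr addrA.
by rewrite /Pr_mln_alpha /Z_mln W_mlnE; under eq_bigr do rewrite W_mlnE.
Qed.

Lemma hard_count_prog_sat P I : (hard_count (prog_sat P I) <= hard_count P)%N.
Proof. by rewrite /hard_count count_filter; apply: sub_count => wr /andP[]. Qed.

Lemma SM'_hard_count P I : SM' P I -> hard_count (prog_sat P I) = hard_count P.
Proof.
move=> [_ /allP hard_sat]; rewrite /hard_count count_filter.
apply: eq_in_count => wr wrP /=; apply: andb_idr => hard_wr.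
by apply: hard_sat; rewrite mem_filter hard_wr.
Qed.

Lemma comp_count_le P I : (comp_count P I <= #|A|)%N.
Proof. by rewrite /comp_count cardE count_size. Qed.

Lemma comp_count_eq_card P I : tight P -> (comp_count P I == #|A|) = `[< SM P I >].
Proof.
move=> tightP; rewrite /comp_count cardE -all_count.
apply/allP/asboolP => [comp_I | /(SM_iff_sat_comp I tightP) comp_I a _ //].
by apply/(SM_iff_sat_comp I tightP) => a; apply: comp_I; rewrite mem_enum.
Qed.

(* Nonzero exactly when [I] satisfies every hard formula of [Comp P]. *)
Definition limit_weight P I : R :=
  expR (soft_sum (prog_sat P I)) *
  (hard_count (prog_sat P I) + comp_count P I == hard_count P + #|A|)%:R.

Lemma limit_weightE P I : tight P ->
  limit_weight P I =
  (if `[< SM P I >] then expR (soft_sum (prog_sat P I)) else 0) *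
  (hard_count (prog_sat P I) == hard_count P)%:R.
Proof.
move=> tightP; rewrite /limit_weight eqn_add_le ?hard_count_prog_sat ?comp_count_le //.
by rewrite comp_count_eq_card //; case: `[< _ >]; rewrite ?andbT ?andbF ?mul0r ?mulr0.
Qed.

Lemma cvg_Pr_lp P I I0 : tight P -> SM' P I0 ->
  Pr_lp_alpha P I alpha @[alpha --> +oo] --> limit_weight P I / \sum_J limit_weight P J.
Proof.
move=> tightP SM'_I0; have [SM_I0 _] := SM'_I0.
under eq_cvg do rewrite Pr_lp_alphaE.
rewrite limit_weightE // (eq_bigr _ (fun J _ => limit_weightE J tightP)).
apply: (cvg_expR_ratio (J0 := I0)).
- by move=> J; case: ifP; rewrite ?expR_ge0.
- exact: hard_count_prog_sat.
- exact: SM'_hard_count.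
- by rewrite asboolT ?expR_gt0.
Qed.

Lemma cvg_Pr_mln_Comp P I I0 : tight P -> SM' P I0 ->
  Pr_mln_alpha (Comp P) I alpha @[alpha --> +oo] -->
    limit_weight P I / \sum_J limit_weight P J.
Proof.
move=> tightP SM'_I0; have [SM_I0 _] := SM'_I0.
under eq_cvg do rewrite Pr_mln_CompE.
apply: (cvg_expR_ratio (J0 := I0)).
- by move=> J; rewrite expR_ge0.
- by move=> J; rewrite leq_add ?hard_count_prog_sat ?comp_count_le.
- rewrite SM'_hard_count //; congr (_ + _)%N.
  by apply/eqP; rewrite comp_count_eq_card ?asboolT.
- exact: expR_gt0.
Qed.

End Weights.

Theorem theorem3 (R : realType) (A : finType) (Pi : program A R) :
  all (fun wr => negative (nbody wr.2)) Pi ->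
  tight Pi ->
  (exists I : {set A}, SM' Pi I) ->
  forall I : {set A}, exists p : R,
    Pr_lp_alpha Pi I alpha @[alpha --> +oo] --> p /\
    Pr_mln_alpha (Comp Pi) I alpha @[alpha --> +oo] --> p.
Proof.
move=> _ tightP [I0 SM'_I0] I.
exists (limit_weight Pi I / \sum_J limit_weight Pi J).
by split; [apply: cvg_Pr_lp SM'_I0 | apply: cvg_Pr_mln_Comp SM'_I0].
Qed.
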